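(* Let $p:E\to X$ be an extremally disconnected bundle. Then $\Gamma^1_p$ is a stonean sheaf (i.e. a sheaf for the dense Grothendieck topology on $\mathcal{O}(X)$), and $\Gamma^{1/2}_p=\Gamma^1_p\restriction\mathrm{RO}(X)^+$ is a sheaf both for the sup Grothendieck topology and for the dense Grothendieck topology on $\mathrm{RO}(X)^+$.
   Context: An extremally disconnected bundle is a continuous map $p:E\to X$ where $E$ is a locally compact Hausdorff space, $X$ is a compact Hausdorff extremally disconnected space (closures of open sets are open), and $p[E]$ is a dense open subset of $X$. $\beta_0(E)=E\cup\{\infty\}$ is the one-point compactification of $E$. A local section of $p$ over an open $D\subseteq X$ is a continuous $s:D\to E$ with $p\circ s=\mathrm{id}_D$. $\mathcal{O}(X)$ is the set of non-empty open subsets of $X$; for $U\in\mathcal{O}(X)$, $\Gamma^1_p(U)$ is the set of continuous $f:U\to\beta_0(E)$ such that $\{x\in U:f(x)\in E\}$ contains an open dense subset $D_f$ of $U$ with $f\restriction D_f$ a local section of $p$ over $D_f$; restriction maps are restriction of functions. $\mathrm{RO}(X)^+$ is the set of non-empty regular open sets ordered by inclusion. For a partial order $P$ and presheaf $\mathcal{F}:P^{\mathrm{op}}\to\mathbf{Set}$ (write $f\restriction s$ for $\mathcal{F}(s\le t)(f)$), a family $\{f_i\in\mathcal{F}(p_i)\}$ is compatible if $f_i\restriction r=f_j\restriction r$ for all $r\le p_i,p_j$; a collation on $p$ is $f\in\mathcal{F}(p)$ with $f\restriction r=f_i\restriction r$ for all $i$ and $r\le p,p_i$; $\{p_i\}$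 is a dense covering of $p$ if for every $q\le p$ some $s$ lies below both $q$ and some $p_i$; if $P$ has all non-empty suprema, $\{p_i\}$ is a complete covering of $p$ if each $p_i\le p$ and $\bigvee p_i=p$. $\mathcal{F}$ is a sheaf for the dense (resp. sup) Grothendieck topology if every compatible family indexed by a dense (resp. complete) covering of $p$ has a unique collation on $p$. *)

From HB Require Import structures.
From mathcomp Require Import all_boot all_order all_algebra.
From mathcomp Require Import all_classical all_reals all_analysis.
Set Implicit Arguments. Unset Strict Implicit. Unset Printing Implicit Defensive.
Local Open Scope classical_set_scope.

Definition extremally_disconnected (X : topologicalType) : Prop :=
  forall U : set X, open U -> open (closure U).

Definition ed_bundle (E X : topologicalType) (p : E -> X) : Prop :=
  locally_compact [set: E] /\ hausdorff_space E /\
  compact [set: X] /\ hausdorff_space X /\ extremally_disconnected X /\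
  continuous p /\ open (range p) /\ dense (range p).

(* beta_0(E) = E + {oo}, the one-point compactification (oo = None) *)
Definition beta0 (E : topologicalType) : topologicalType :=
  one_point_compactification E.

Definition Opens (X : topologicalType) : set (set X) :=
  [set U | open U /\ U !=set0].
Definition ROplus (X : topologicalType) : set (set X) :=
  [set U | regopen U /\ U !=set0].

(* A section over U is a function U -> T; we represent it by a total
   function X -> T, two representatives being equal as sections over U
   iff they agree on U.  Restriction to r is then the identity on
   representatives, read over r. *)
Definition agree_on (X T : Type) (r : set X) (f g : X -> T) : Prop :=
  forall x, r x -> f x = g x.

Definition Gamma1 (E X : topologicalType) (p : E -> X) (U : set X)
    (f : X -> beta0 E) : Prop :=
  {within U, continuous f} /\
  exists D : set X,
    open D /\ D `<=` U /\ U `<=` closure D /\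
    D `<=` [set x | exists e : E, f x = Some e] /\
    exists s : X -> E,
      {within D, continuous s} /\
      (forall x, D x -> f x = Some (s x) /\ p (s x) = x).

(* Gamma^{1/2}_p = Gamma^1_p restricted to RO(X)^+ *)
Definition Gamma_half (E X : topologicalType) (p : E -> X) :=
  @Gamma1 E X p.

Section Sheaves.
Context {X : topologicalType} {T : Type}.
Implicit Types (P : set (set X)) (V : set X).

Definition compatible_family P (I : Type) (U : I -> set X) (f : I -> X -> T) :=
  forall i j r, P r -> r `<=` U i -> r `<=` U j -> agree_on r (f i) (f j).

Definition collation P (I : Type) (U : I -> set X) (f : I -> X -> T) V
    (g : X -> T) :=
  forall i r, P r -> r `<=` V -> r `<=` U i -> agree_on r g (f i).

Definition dense_covering P (I : Type) (U : I -> set X) V :=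
  forall q, P q -> q `<=` V -> exists s i, P s /\ s `<=` q /\ s `<=` U i.

Definition complete_covering P (I : Type) (U : I -> set X) V :=
  (exists i : I, True) /\ (forall i, U i `<=` V) /\
  (forall W, P W -> (forall i, U i `<=` W) -> V `<=` W).

(* Sec V g : g (represents) an element of F(V) *)
Definition is_sheaf P (Sec : set X -> (X -> T) -> Prop)
    (cov : set (set X) -> forall I : Type, (I -> set X) -> set X -> Prop) :=
  forall (I : Type) (U : I -> set X) (f : I -> X -> T) V,
    P V -> (forall i, P (U i)) -> (forall i, Sec (U i) (f i)) ->
    cov P I U V -> compatible_family P U f ->
    (exists g, Sec V g /\ collation P U f V g) /\
    (forall g h, Sec V g -> Sec V h ->
       collation P U f V g -> collation P U f V h -> agree_on V g h).

End Sheaves.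

From HB Require Import structures.
From mathcomp Require Import all_boot all_order all_algebra.
From mathcomp Require Import all_classical all_reals all_analysis.
Set Implicit Arguments. Unset Strict Implicit. Unset Printing Implicit Defensive.
Local Open Scope classical_set_scope.

(* In an extremally disconnected space disjoint open sets have disjoint
   closures.  Hence a continuous map h from a dense open subset A of an open
   set V into the compact Hausdorff space beta0 E extends continuously to V:
   if h had no limit along A at some x in V, then for a cluster value y and a
   closed neighbourhood B of y, the disjoint open sets A /\ h^-1(interior B)
   and A /\ h^-1(~ B) would both accumulate at x.  A compatible family over a
   dense covering of V glues on the union of the covering sets, which is dense
   open in V, and then extends to V; the local sections glue on the union of
   their domains.  Two continuous maps into a Hausdorff space agreeing on a
   dense set agree, which gives uniqueness.  Regular open sets are closed under
   non-empty intersections, and both complete and dense coverings by regular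
   open sets are dense coverings in O(X), so the same argument applies to
   RO(X)^+. *)

Lemma ed_closure_disjoint (X : topologicalType) (O1 O2 : set X) :
  extremally_disconnected X -> open O1 -> open O2 -> O1 `&` O2 = set0 ->
  closure O1 `&` closure O2 = set0.
Proof.
move=> edX oO1 oO2 O12; apply/seteqP; split => // x [clO1x clO2x].
have [w [inO2 clO1w]] := clO2x _ (open_nbhs_nbhs (conj (edX _ oO1) clO1x)).
have [z inO12] := clO1w _ (open_nbhs_nbhs (conj oO2 inO2)).
by rewrite O12 in inO12.
Qed.

Lemma exists_glue (X T I : Type) (U : I -> set X) (f : I -> X -> T) :
  inhabited T -> (forall i j x, U i x -> U j x -> f i x = f j x) ->
  exists h : X -> T, forall i x, U i x -> h x = f i x.
Proof.
move=> [t0] fU; exists (fun x => if pselect (exists i, U i x) is left ex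
  then f (projT1 (cid ex)) x else t0) => i x Uix.
case: pselect => [ex|]; last by case; exists i.
by case: cid => j /= Ujx; exact: fU.
Qed.

Lemma continuous_glue (X Y : topologicalType) (I : Type) (U : I -> set X)
    (f : I -> X -> Y) (h : X -> Y) :
  (forall i, open (U i)) -> (forall i, {within U i, continuous f i}) ->
  (forall i x, U i x -> h x = f i x) -> {within \bigcup_i U i, continuous h}.
Proof.
move=> oU cf hf; rewrite continuous_open_subspace; last exact: bigcup_open.
move=> x /set_mem[i _ Uix]; rewrite /continuous_at (hf i x Uix).
apply: cvg_trans (_ : f i @ x --> f i x).
  apply: near_eq_cvg; near=> y; apply/esym/hf; near: y.
  exact: open_nbhs_nbhs.
by move: (cf i); rewrite continuous_open_subspace // => /(_ x (mem_set Uix)).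
Unshelve. all: by end_near. Qed.

Lemma dense_covering_closure (X : topologicalType) (I : Type)
    (U D : I -> set X) (V : set X) :
  open V -> dense_covering (@Opens X) U V ->
  (forall i, U i `<=` closure (D i)) ->
  V `<=` closure (\bigcup_i (V `&` D i)).
Proof.
move=> oV cov UD x Vx B; rewrite nbhsE => -[N [oN Nx] NB].
have [|s [i [[os [z sz]] [sNV sU]]]] := cov (N `&` V) _ (@subIsetr _ N V).
  by split; [exact: openI | exists x].
have [w [Diw sw]] := UD i z (sU z sz) _ (open_nbhs_nbhs (conj os sz)).
have [Nw Vw] := sNV w sw.
by exists w; split; [exists i | exact: NB].
Qed.

Lemma continuous_agree_closure (X Y : topologicalType) (V D : set X)
    (g h : X -> Y) :
  hausdorff_space Y -> open V -> {within V, continuous g} ->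
  {within V, continuous h} -> V `<=` closure D -> agree_on D g h ->
  agree_on V g h.
Proof.
move=> hY oV + + VD gh x Vx; rewrite !continuous_open_subspace //.
move=> /(_ x (mem_set Vx)) cg /(_ x (mem_set Vx)) ch.
apply: hY => N1 N2 /cg N1g /ch N2h.
have N12 : nbhs x (g @^-1` N1 `&` h @^-1` N2) by exact: filterI.
have [z [Dz [/= N1z N2z]]] := VD x Vx _ N12.
by exists (g z); split => //; rewrite gh.
Qed.

Lemma continuous_of_cvg_within (X Y : topologicalType) (A V : set X)
    (h g : X -> Y) :
  regular_space Y -> open V -> V `<=` closure A ->
  (forall x, V x -> h @ within A (nbhs x) --> g x) -> {within V, continuous g}.
Proof.
move=> regY oV VA hg; rewrite continuous_open_subspace // => x /set_mem Vx.
move=> N /regY[B nB cBN]; have := hg x Vx B nB; rewrite /= {1}nbhsE.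
move=> -[M [oM Mx] MB]; rewrite nbhs_simpl /=.
apply: filterS (open_nbhs_nbhs (conj (openI oM oV) (conj Mx Vx))).
move=> z [Mz Vz].
have PF := within_nbhs_proper (VA z Vz).
apply/cBN/(closed_cvg _ (@closed_closure _ B) _ _ (hg z Vz)).
apply: filterS (open_nbhs_nbhs (conj oM Mz)) => w Mw Aw.
exact/subset_closure/MB.
Qed.

Section ed_extension.
Variables (X Y : topologicalType).
Hypotheses (edX : extremally_disconnected X) (cptY : compact [set: Y])
  (regY : regular_space Y).
Variables (A : set X) (h : X -> Y).
Hypotheses (oA : open A) (ch : {within A, continuous h}).

Lemma ed_cvg_within x :
  closure A x -> exists y : Y, h @ within A (nbhs x) --> y.
Proof.
move=> clAx; have PF := within_nbhs_proper clAx.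
have [y [_ cly]] := @cptY (h @ within A (@nbhs _ X x)) _ filterT.
exists y => N /regY[B nB cBN].
suff : nbhs x [set z | A z -> closure B (h z)].
  by apply: filterS => z clBz Az; exact/cBN/clBz.
apply: contrapT => nclB.
have openhV : forall W, open W -> open (A `&` h @^-1` W).
  by apply/continuous_inP => //; rewrite -continuous_open_subspace.
have disj : (A `&` h @^-1` B°) `&` (A `&` h @^-1` ~` closure B) = set0.
  apply/seteqP; split => // z [[_ Bz] [_]]; apply.
  exact: subset_closure (interior_subset Bz).
have := ed_closure_disjoint edX (openhV _ (@open_interior _ B))
  (openhV _ (closed_openC (@closed_closure _ B))) disj.
apply/eqP/set0P; exists x; split => M nM.
- have FM : (h @ within A (nbhs x)) (h @` (A `&` M)).
    by apply: filterS nM => z Mz Az; exists z.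
  have [_ [[z [Az Mz] <-] Bhz]] := cly _ _ FM (nbhs_interior nB).
  by exists z.
- apply: contrapT => nM0; apply: nclB; apply: filterS nM => z Mz Az.
  by apply: contrapT => nBz; apply: nM0; exists z.
Qed.

Lemma ed_continuous_extension (V : set X) : open V -> V `<=` closure A ->
  exists2 g, {within V, continuous g} & forall x, A x -> g x = h x.
Proof.
move=> oV VA.
have hcvg x : A x -> h @ within A (nbhs x) --> h x.
  move=> Ax; apply: cvg_trans (cvg_app h (cvg_within A)) _.
  by move: ch; rewrite continuous_open_subspace // => /(_ x (mem_set Ax)).
have /choice[g gP] : forall x, exists y : Y,
    (A x -> y = h x) /\ (closure A x -> h @ within A (nbhs x) --> y).
  move=> x; have [Ax|nAx] := pselect (A x).
    by exists (h x); split => // _; exact: hcvg.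
  have [clAx|nclAx] := pselect (closure A x); last by exists (h x).
  by have [y hy] := ed_cvg_within clAx; exists y.
exists g; last by move=> x /(gP x).1.
apply: (continuous_of_cvg_within regY oV VA) => x Vx.
exact: (gP x).2 (VA x Vx).
Qed.

End ed_extension.

Section Gamma1_sheaf.
Variables (E X : topologicalType) (p : E -> X).

Lemma Gamma1_of_dense_covering (I : Type) (U : I -> set X)
    (f : I -> X -> beta0 E) (V : set X) (g : X -> beta0 E) :
  open V -> V !=set0 -> (forall i, Gamma1 p (U i) (f i)) ->
  dense_covering (@Opens X) U V -> {within V, continuous g} ->
  (forall i x, V x -> U i x -> g x = f i x) -> Gamma1 p V g.
Proof.
move=> oV [x0 Vx0] secU cov cg gf.
have /choice[Ds DsP] : forall i, exists Ds : set X * (X -> E),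
    [/\ open Ds.1, Ds.1 `<=` U i, U i `<=` closure Ds.1,
        {within Ds.1, continuous Ds.2} &
        forall x, Ds.1 x -> f i x = Some (Ds.2 x) /\ p (Ds.2 x) = x].
  move=> i; have [_ [D [oD [DU [UD [_ [s [cs sP]]]]]]]] := secU i.
  by exists (D, s); split.
pose D i := V `&` (Ds i).1; pose s i := (Ds i).2.
have oD i : open (D i) by rewrite /D; apply: openI oV _; have [] := DsP i.
have gs i x : D i x -> g x = Some (s i x) /\ p (s i x) = x.
  move=> [Vx Dx]; have [_ DU _ _ fs] := DsP i.
  by rewrite (gf i x Vx (DU x Dx)); exact: fs.
have VD : V `<=` closure (\bigcup_i D i).
  by apply: dense_covering_closure oV cov _ => i; have [] := DsP i.
have [e0] : inhabited E.
  have [z [[i _ Diz] _]] := VD x0 Vx0 setT filterT.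
  by constructor; exact: s i z.
have [t ts] : exists t : X -> E, forall i x, D i x -> t x = s i x.
  apply: exists_glue => // i j x Dix Djx; apply: Some_inj.
  by rewrite -(gs i x Dix).1 -(gs j x Djx).1.
split => //; exists (\bigcup_i D i); split; first exact: bigcup_open.
split; first by move=> x [i _ []].
split => //; split.
  by move=> x [i _ Dix]; exists (t x); rewrite (ts i) // (gs i x Dix).1.
exists t; split.
  apply: continuous_glue oD _ ts => i.
  by apply: continuous_subspaceW (@subIsetr _ V _) _; have [] := DsP i.
by move=> x [i _ Dix]; rewrite (ts i x Dix); exact: gs.
Qed.

Hypotheses (edX : extremally_disconnected X) (hE : hausdorff_space (beta0 E)).

Lemma Gamma1_glue (I : Type) (U : I -> set X) (f : I -> X -> beta0 E)
    (V : set X) :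
  open V -> V !=set0 -> (forall i, open (U i)) ->
  (forall i, Gamma1 p (U i) (f i)) -> dense_covering (@Opens X) U V ->
  (forall i j x, U i x -> U j x -> f i x = f j x) ->
  exists2 g, Gamma1 p V g & forall i x, V x -> U i x -> g x = f i x.
Proof.
move=> oV V0 oU secU cov fU.
have [h hf] := exists_glue (@inhabits (beta0 E) None) fU.
have oA : open (\bigcup_i (V `&` U i)).
  by apply: bigcup_open => i _; exact: openI.
have hA : {within \bigcup_i (V `&` U i), continuous h}.
  apply: (@continuous_glue _ _ _ (fun i => V `&` U i) f) => [i|i|i x [_ /hf//]].
    exact: openI.
  exact: continuous_subspaceW (@subIsetr _ V (U i)) (secU i).1.
have cptE : compact [set: beta0 E] := one_point_compactification_compact.
have regE : regular_space (beta0 E).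
  by move=> a; exact: compact_regular hE cptE filterT.
have [g cg gh] := ed_continuous_extension edX cptE regE oA hA oV
  (dense_covering_closure oV cov (fun i => @subset_closure _ (U i))).
have gf i x : V x -> U i x -> g x = f i x.
  by move=> Vx Uix; rewrite gh ?(hf i) //; exists i.
by exists g => //; exact: Gamma1_of_dense_covering oV V0 secU cov cg gf.
Qed.

Lemma Gamma1_is_sheaf (P : set (set X))
    (cov : set (set X) -> forall I : Type, (I -> set X) -> set X -> Prop) :
  P `<=` @Opens X ->
  (forall U W, P U -> P W -> U `&` W !=set0 -> P (U `&` W)) ->
  (forall I (U : I -> set X) V, P V -> (forall i, P (U i)) ->
    cov P I U V -> dense_covering (@Opens X) U V) ->
  is_sheaf P (Gamma1 p) cov.
Proof.
move=> PO PI Pcov I U f V PV PU secU covU compat.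
have [oV V0] := PO V PV; have oU i : open (U i) := (PO _ (PU i)).1.
have dcov := Pcov I U V PV PU covU.
have fU i j x : U i x -> U j x -> f i x = f j x.
  move=> Uix Ujx; apply: (compat i j (U i `&` U j)) => //.
  by apply: PI => //; exists x.
have collationE g : collation P U f V g ->
    forall i x, V x -> U i x -> g x = f i x.
  move=> cg i x Vx Uix; apply: (cg i (V `&` U i)) => //.
  by apply: PI => //; exists x.
split.
  have [g sg gf] := Gamma1_glue oV V0 oU secU dcov fU.
  by exists g; split => // i r _ rV rU x rx; exact: gf (rV x rx) (rU x rx).
move=> g h sg sh /collationE cg /collationE ch.
apply: continuous_agree_closure hE oV sg.1 sh.1
  (dense_covering_closure oV dcov (fun i => @subset_closure _ (U i))) _.
by move=> x [i _ [Vx Uix]]; rewrite (cg i) ?(ch i).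
Qed.

End Gamma1_sheaf.

Lemma regopen_open (X : topologicalType) (U : set X) : regopen U -> open U.
Proof. by move=> <-; exact: open_interior. Qed.

Lemma regopenI (X : topologicalType) (U W : set X) :
  regopen U -> regopen W -> regopen (U `&` W).
Proof.
move=> rU rW; rewrite /regopen eqEsubset; split.
  by move=> x /(interiorS (@closureI _ U W)); rewrite interiorI rU rW.
rewrite -open_subsetE; first exact: subset_closure.
exact: openI (regopen_open rU) (regopen_open rW).
Qed.

Lemma interior_closure_subset (X : topologicalType) (q V : set X) :
  regopen V -> q `<=` V -> (closure q)° `<=` V.
Proof. by move=> rV qV; rewrite -rV; exact/interiorS/closureS. Qed.

Lemma dense_covering_ROplus_Opens (X : topologicalType) (I : Type)
    (U : I -> set X) (V : set X) :
  regopen V -> dense_covering (@ROplus X) U V -> dense_covering (@Opens X) U V.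
Proof.
move=> rV cov q [oq [z qz]] qV.
have qr : q `<=` (closure q)°.
  by rewrite -open_subsetE //; exact: subset_closure.
have [|s [i [[rs [w sw]] [sr sU]]]] := cov _ _ (interior_closure_subset rV qV).
  split; first exact/interior_closed_regopen/closed_closure.
  by exists z; exact: qr.
have [y [qy sy]] :=
  interior_subset (sr w sw) _ (open_nbhs_nbhs (conj (regopen_open rs) sw)).
exists (q `&` s), i; split.
  by split; [exact: openI (regopen_open rs) | exists y].
by split => // t [_ st]; exact: sU.
Qed.

Lemma complete_covering_ROplus_Opens (X : topologicalType) (I : Type)
    (U : I -> set X) (V : set X) :
  (forall i, ROplus (U i)) -> complete_covering (@ROplus X) U V ->
  dense_covering (@Opens X) U V.
Proof.
move=> rU [[i0 _] [_ sup]] q [oq [z qz]] qV.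
have oU i : open (U i) := regopen_open (rU i).1.
have UW i : U i `<=` (closure (\bigcup_i U i))°.
  by rewrite -open_subsetE // => x Uix; apply: subset_closure; exists i.
have VW : V `<=` (closure (\bigcup_i U i))°.
  apply: sup => //; split; first exact/interior_closed_regopen/closed_closure.
  by have [_ [u Uu]] := rU i0; exists u; exact: UW Uu.
have [w [[i _ Uiw] qw]] :=
  interior_subset (VW z (qV z qz)) _ (open_nbhs_nbhs (conj oq qz)).
exists (q `&` U i), i; split; first by split; [exact: openI | exists w].
by split => // t [].
Qed.

Theorem mainTheorem11 (E X : topologicalType) (p : E -> X) :
  ed_bundle p ->
  is_sheaf (@Opens X) (Gamma1 p) (@dense_covering X) /\
  is_sheaf (@ROplus X) (Gamma_half p) (@complete_covering X) /\
  is_sheaf (@ROplus X) (Gamma_half p) (@dense_covering X).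
Proof.
move=> [lcE [hE [_ [_ [edX _]]]]].
have hbeta0 := one_point_compactification_hausdorff lcE hE.
have ROplus_Opens : @ROplus X `<=` @Opens X.
  by move=> U [rU U0]; split => //; exact: regopen_open.
have ROplusI (U W : set X) :
    ROplus U -> ROplus W -> U `&` W !=set0 -> ROplus (U `&` W).
  by move=> [rU _] [rW _] UW0; split => //; exact: regopenI.
split; [|split]; apply: (Gamma1_is_sheaf edX hbeta0) => //.
- by move=> U W [oU _] [oW _] UW0; split => //; exact: openI.
- by move=> I U V _ PU; exact: complete_covering_ROplus_Opens.
- by move=> I U V [rV _] _; exact: dense_covering_ROplus_Opens.
Qed.
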